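(* Let $\lambda$ be a nonzero real number. For every integer $n\ge0$, \[ \int_{0}^{\infty}e^{-2x}\,\mathrm{bel}_{n,\lambda}(-x)\,dx=\frac{\beta_{n+1,\lambda}-2^{n+1}\beta_{n+1,\frac{\lambda}{2}}}{n+1}. \]
   Context: For nonzero real $\lambda$, $e_\lambda(t)=(1+\lambda t)^{1/\lambda}$. The partially degenerate Bell polynomials $\mathrm{bel}_{n,\lambda}(x)$ are defined by $e^{x(e_{\lambda}(t)-1)}=\sum_{n=0}^{\infty}\mathrm{bel}_{n,\lambda}(x)\frac{t^{n}}{n!}$. The degenerate Bernoulli numbers $\beta_{n,\mu}$ (for nonzero real $\mu$) are defined by $\frac{t}{e_{\mu}(t)-1}=\sum_{n=0}^{\infty}\beta_{n,\mu}\frac{t^{n}}{n!}$, with $e_\mu(t)=(1+\mu t)^{1/\mu}$; here $\mu=\lambda$ or $\mu=\lambda/2$. *)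

From Stdlib Require Import Reals.
From Coquelicot Require Import Coquelicot.
Open Scope R_scope.

(* e_lambda(t) = (1 + lambda t)^(1/lambda)  (real power, meaningful for 1 + lambda t > 0,
   in particular for t near 0). *)
Definition e_lam (lam t : R) : R := Rpower (1 + lam * t) (/ lam).

Definition is_degenerate_bell (lam : R) (bel : nat -> R -> R) : Prop :=
  forall x : R, exists r : R, 0 < r /\
    forall t : R, Rabs t < r ->
      is_pseries (fun n => bel n x / INR (Factorial.fact n)) t (exp (x * (e_lam lam t - 1))).

(* beta : nat -> R is the sequence of degenerate Bernoulli numbers beta_{n,mu}:
   sum_n beta n t^n / n! = t / (e_mu(t) - 1) for t near 0 (t <> 0; the value at
   t = 0 is the removable-singularity value). *)
Definition is_degenerate_bernoulli (mu : R) (beta : nat -> R) : Prop :=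
  exists r : R, 0 < r /\
    forall t : R, 0 < Rabs t < r ->
      is_pseries (fun n => beta n / INR (Factorial.fact n)) t (t / (e_lam mu t - 1)).

(* Put [A t = e_lam lam t - 1], so that [A 0 = 0], and compare coefficients.
   Since [(exp (x A))' = x A' exp (x A)], the coefficients of [exp (x A t)] obey the same
   recursion as those of [sum_k x^k A^k / k!], hence [bel n x / n! = sum_k x^k / k! [t^n] A^k].
   Integrating against [exp (-2 x)] with [int_0^oo x^k exp (-2 x) dx = k! / 2^(k+1)] yields
   [n! sum_k (-1)^k [t^n] A^k / 2^(k+1) = n! [t^n] 1 / (2 + A) = n! [t^n] 1 / (e_lam lam t + 1)].
   Finally [t / (e + 1) = t / (e - 1) - 2 t / (e^2 - 1)] for [e = e_lam lam t], and
   [e^2 = e_lam (lam/2) (2 t)], so the coefficient of [t^(n+1)] is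
   [(beta_(n+1,lam) - 2^(n+1) beta_(n+1,lam/2)) / (n+1)!].
   Identities between sums become identities between coefficients by uniqueness of power series
   expansions. *)

From Stdlib Require Import Reals Lra Lia Arith.
From Coquelicot Require Import Coquelicot.
Open Scope R_scope.

Lemma Rlt_Rmin (x y z : R) : x < Rmin y z -> x < y /\ x < z.
Proof. intros H. split; eapply Rlt_le_trans; [exact H | apply Rmin_l | exact H | apply Rmin_r]. Qed.

Lemma sum_f_R0_mult_l (c : R) (f : nat -> R) (n : nat) :
  sum_f_R0 (fun i => c * f i) n = c * sum_f_R0 f n.
Proof. rewrite scal_sum. apply sum_eq => i _. ring. Qed.

Lemma sum_f_R0_swap (f : nat -> nat -> R) (m n : nat) :
  sum_f_R0 (fun i => sum_f_R0 (f i) n) m = sum_f_R0 (fun j => sum_f_R0 (fun i => f i j) m) n.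
Proof.
  rewrite <- !sum_n_Reals.
  rewrite (sum_n_ext _ (fun i => sum_n (f i) n)) by (intros; now rewrite sum_n_Reals).
  rewrite (sum_n_switch (G := R_AbelianMonoid)).
  apply sum_n_ext => j. now rewrite sum_n_Reals.
Qed.

Lemma sum_f_R0_zero_tail (f : nat -> R) (m n : nat) : (m <= n)%nat ->
  (forall k, (m < k <= n)%nat -> f k = 0) -> sum_f_R0 f n = sum_f_R0 f m.
Proof.
  induction 1 as [|n Hmn IH]; intros Hf; [reflexivity|].
  rewrite tech5, IH, (Hf (S n)); [ring | lia | intros k Hk; apply Hf; lia].
Qed.

Definition PS_one (n : nat) : R := match n with O => 1 | S _ => 0 end.

Fixpoint PS_pow (a : nat -> R) (k : nat) : nat -> R :=
  match k with O => PS_one | S k => PS_mult a (PS_pow a k) end.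

(* Coefficients of [W (A t)] for [W z = sum w_k z^k] and [A t = sum a_n t^n] with [a 0 = 0]:
   then [PS_pow a k n = 0] for [k > n], so truncating the sum at [n] loses nothing. *)
Definition PS_comp (w a : nat -> R) (n : nat) : R :=
  sum_f_R0 (fun k => w k * PS_pow a k n) n.

Lemma PS_mult_one_l (b : nat -> R) (n : nat) : PS_mult PS_one b n = b n.
Proof.
  unfold PS_mult. destruct n as [|n]; [simpl; ring|].
  rewrite decomp_sum by lia. simpl pred.
  rewrite sum_eq_R0 by (intros; simpl; ring). rewrite Nat.sub_0_r. simpl; ring.
Qed.

Lemma PS_pow_lt (a : nat -> R) (k n : nat) : a 0%nat = 0 -> (n < k)%nat -> PS_pow a k n = 0.
Proof.
  intros Ha0. revert n. induction k as [|k IH]; intros n Hn; [lia|].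
  apply sum_eq_R0. intros [|i] Hi.
  - rewrite Ha0. ring.
  - rewrite IH by lia. ring.
Qed.

Lemma PS_mult_incr_1_r (a b : nat -> R) (n : nat) :
  PS_mult a (PS_incr_1 b) n = PS_incr_1 (PS_mult a b) n.
Proof.
  unfold PS_mult. destruct n as [|n]; [exact (Rmult_0_r _)|].
  rewrite tech5, Nat.sub_diag. change (PS_incr_1 b 0) with 0. rewrite Rmult_0_r, Rplus_0_r.
  apply sum_eq. intros k Hk. now rewrite Nat.sub_succ_l.
Qed.

Lemma PS_mult_cancel_l (a x y : nat -> R) : a 0%nat <> 0 ->
  (forall n, PS_mult a x n = PS_mult a y n) -> forall n, x n = y n.
Proof.
  intros Ha0 Hxy n. induction n as [n IH] using (well_founded_induction lt_wf).
  specialize (Hxy n). unfold PS_mult in Hxy. destruct n as [|n].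
  - simpl in Hxy. now apply Rmult_eq_reg_l with (a 0%nat).
  - rewrite 2!(decomp_sum _ (S n)) in Hxy by lia. simpl pred in Hxy.
    rewrite (sum_eq _ (fun i => a (S i) * y (S n - S i)%nat)) in Hxy
      by (intros i Hi; rewrite IH by lia; reflexivity).
    rewrite !Nat.sub_0_r in Hxy.
    apply Rmult_eq_reg_l with (a 0%nat); [lra | exact Ha0].
Qed.

Lemma PS_derive_mult_unique (h y z : nat -> R) :
  (forall n, PS_derive y n = PS_mult h y n) ->
  (forall n, PS_derive z n = PS_mult h z n) ->
  y 0%nat = z 0%nat -> forall n, y n = z n.
Proof.
  intros Hy Hz H0 n. induction n as [n IH] using (well_founded_induction lt_wf).
  destruct n as [|n]; [exact H0|].
  assert (Hn : INR (S n) <> 0) by (apply not_0_INR; lia).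
  apply Rmult_eq_reg_l with (INR (S n)); [|exact Hn].
  change (PS_derive y n = PS_derive z n).
  rewrite Hy, Hz. apply sum_eq. intros k Hk. rewrite IH by lia. reflexivity.
Qed.

Lemma PS_mult_comp (h w a : nat -> R) (n : nat) : a 0%nat = 0 ->
  PS_mult h (PS_comp w a) n = sum_f_R0 (fun k => w k * PS_mult h (PS_pow a k) n) n.
Proof.
  intros Ha0. unfold PS_mult, PS_comp.
  transitivity (sum_f_R0 (fun j => sum_f_R0 (fun k => h j * (w k * PS_pow a k (n - j)%nat)) n) n).
  - apply sum_eq. intros j Hj. rewrite sum_f_R0_mult_l. f_equal.
    symmetry. apply sum_f_R0_zero_tail; [lia|].
    intros k Hk. rewrite PS_pow_lt by (auto; lia). ring.
  - rewrite sum_f_R0_swap. apply sum_eq. intros k Hk. rewrite <- sum_f_R0_mult_l.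
    apply sum_eq. intros j Hj. ring.
Qed.

Lemma PS_mult_const_plus_l (c : R) (a b : nat -> R) (n : nat) :
  PS_mult (fun m => c * PS_one m + a m) b n = c * b n + PS_mult a b n.
Proof.
  unfold PS_mult at 1.
  rewrite (sum_eq _ (fun j => c * (PS_one j * b (n - j)%nat) + a j * b (n - j)%nat)) by (intros; ring).
  rewrite plus_sum, sum_f_R0_mult_l. f_equal. f_equal. exact (PS_mult_one_l b n).
Qed.

Lemma PS_mult_inv_comp (c : R) (a : nat -> R) (n : nat) : c <> 0 -> a 0%nat = 0 ->
  PS_mult (fun m => c * PS_one m + a m) (PS_comp (fun k => (-1) ^ k / c ^ S k) a) n = PS_one n.
Proof.
  intros Hc Ha0. set (u := PS_pow a).
  assert (Hu : forall k, (n < k)%nat -> u k n = 0) by (intros; now apply PS_pow_lt).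
  assert (Hshift : c * PS_comp (fun k => (-1) ^ k / c ^ S k) a n
      = u 0%nat n + sum_f_R0 (fun k => (-1) ^ S k / c ^ S k * u (S k) n) n).
  { unfold PS_comp. fold u. rewrite <- sum_f_R0_mult_l.
    rewrite <- (sum_f_R0_zero_tail (fun k => c * ((-1) ^ k / c ^ S k * u k n)) n (S n)) by
      (try lia; intros k Hk; rewrite Hu by lia; ring).
    rewrite decomp_sum by lia. simpl pred. f_equal.
    - simpl. field. exact Hc.
    - apply sum_eq. intros k Hk. simpl pow. field. split; [apply pow_nonzero |]; exact Hc. }
  rewrite PS_mult_const_plus_l, Hshift, PS_mult_comp by exact Ha0. fold u.
  rewrite Rplus_assoc, <- plus_sum, sum_eq_R0.
  - apply Rplus_0_r.
  - intros k _. unfold u. cbn [PS_pow pow]. field. split; [apply pow_nonzero |]; exact Hc.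
Qed.

Lemma PS_derive_exp_comp (x : R) (a : nat -> R) (n : nat) : a 0%nat = 0 ->
  (forall k m, PS_derive (PS_pow a (S k)) m = INR (S k) * PS_mult (PS_derive a) (PS_pow a k) m) ->
  PS_derive (PS_comp (fun k => x ^ k / INR (fact k)) a) n
  = PS_mult (fun i => x * PS_derive a i) (PS_comp (fun k => x ^ k / INR (fact k)) a) n.
Proof.
  intros Ha0 Hpow. rewrite PS_mult_comp by exact Ha0.
  unfold PS_derive at 1, PS_comp. rewrite decomp_sum by lia. simpl pred.
  change (PS_pow a 0 (S n)) with 0. rewrite Rmult_0_r, Rplus_0_l, <- sum_f_R0_mult_l.
  apply sum_eq. intros k _.
  transitivity (x ^ S k / INR (fact (S k)) * PS_derive (PS_pow a (S k)) n).
  { unfold PS_derive. ring. }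
  replace (PS_mult (fun i => x * PS_derive a i) (PS_pow a k) n)
    with (x * PS_mult (PS_derive a) (PS_pow a k) n)
    by (unfold PS_mult; rewrite <- sum_f_R0_mult_l; apply sum_eq; intros; ring).
  rewrite Hpow, fact_simpl, mult_INR. simpl pow. field.
  split; [apply INR_fact_neq_0 | apply not_0_INR; lia].
Qed.

Definition is_pseries_on (a : nat -> R) (r : R) (f : R -> R) : Prop :=
  forall t, Rabs t < r -> is_pseries a t (f t).

Lemma is_pseries_on_ext (a : nat -> R) (r : R) (f g : R -> R) :
  (forall t, Rabs t < r -> f t = g t) -> is_pseries_on a r f -> is_pseries_on a r g.
Proof. intros Hfg Ha t Ht. rewrite <- Hfg by exact Ht. now apply Ha. Qed.

Lemma is_pseries_on_le (a : nat -> R) (r r' : R) (f : R -> R) :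
  r' <= r -> is_pseries_on a r f -> is_pseries_on a r' f.
Proof. intros Hr Ha t Ht. apply Ha. lra. Qed.

Lemma CV_radius_gt_of_ex_pseries (a : nat -> R) (r : R) :
  (forall t, 0 < Rabs t < r -> ex_pseries a t) ->
  forall t, Rabs t < r -> Rbar_lt (Rabs t) (CV_radius a).
Proof.
  intros Ha t Ht. set (s := (Rabs t + r) / 2).
  assert (Hs : Rabs s = s) by (apply Rabs_pos_eq; unfold s; pose proof (Rabs_pos t); lra).
  assert (Hlim : is_lim_seq (fun n => a n * s ^ n) 0).
  { apply ex_series_lim_0, ex_pseries_R, Ha. rewrite Hs. unfold s. pose proof (Rabs_pos t). lra. }
  apply Rbar_lt_le_trans with s; [simpl; unfold s; lra|].
  rewrite <- Hs. apply Rbar_not_lt_le. intros Hout. exact (CV_disk_outside a s Hout Hlim).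
Qed.

Lemma is_pseries_on_CV_radius (a : nat -> R) (r : R) (f : R -> R) :
  is_pseries_on a r f -> forall t, Rabs t < r -> Rbar_lt (Rabs t) (CV_radius a).
Proof. intros Ha. apply CV_radius_gt_of_ex_pseries. intros t Ht. eexists. apply Ha. lra. Qed.

Lemma is_pseries_on_PSeries (a : nat -> R) (r : R) (f : R -> R) :
  is_pseries_on a r f -> forall t, Rabs t < r -> PSeries a t = f t.
Proof. intros Ha t Ht. now apply is_pseries_unique, Ha. Qed.

Lemma is_pseries_on_one (r : R) : is_pseries_on PS_one r (fun _ => 1).
Proof.
  intros t _. unfold is_pseries, is_series.
  apply filterlim_ext with (fun _ => 1); [|apply filterlim_const].
  intros N. induction N as [|N IH].
  - rewrite sum_O. cbn. ring.
  - rewrite sum_Sn, <- IH. cbn. ring.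
Qed.

Lemma is_pseries_on_scal (c : R) (a : nat -> R) (r : R) (f : R -> R) :
  is_pseries_on a r f -> is_pseries_on (fun n => c * a n) r (fun t => c * f t).
Proof.
  intros Ha t Ht. apply (is_pseries_scal (V := R_NormedModule) c a t (f t)).
  - apply Rmult_comm.
  - now apply Ha.
Qed.

Lemma is_pseries_on_plus (a b : nat -> R) (r : R) (f g : R -> R) :
  is_pseries_on a r f -> is_pseries_on b r g ->
  is_pseries_on (fun n => a n + b n) r (fun t => f t + g t).
Proof. intros Ha Hb t Ht. exact (is_pseries_plus a b t _ _ (Ha t Ht) (Hb t Ht)). Qed.

Lemma is_pseries_on_mult (a b : nat -> R) (r : R) (f g : R -> R) :
  is_pseries_on a r f -> is_pseries_on b r g ->
  is_pseries_on (PS_mult a b) r (fun t => f t * g t).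
Proof.
  intros Ha Hb t Ht. apply is_pseries_mult; auto.
  - now apply (is_pseries_on_CV_radius a r f).
  - now apply (is_pseries_on_CV_radius b r g).
Qed.

Lemma is_pseries_on_pow (a : nat -> R) (r : R) (f : R -> R) (k : nat) :
  is_pseries_on a r f -> is_pseries_on (PS_pow a k) r (fun t => f t ^ k).
Proof.
  intros Ha. induction k as [|k IH]; [apply is_pseries_on_one|].
  exact (is_pseries_on_mult _ _ r _ _ Ha IH).
Qed.

Lemma is_pseries_scal_arg (a : nat -> R) (c t l : R) :
  is_pseries a (c * t) l -> is_pseries (fun n => c ^ n * a n) t l.
Proof.
  unfold is_pseries. apply is_series_ext. intros n.
  rewrite pow_n_pow. unfold scal; simpl; unfold mult; simpl.
  rewrite (pow_n_pow t n : @pow_n R_AbsRing t n = _), Rpow_mult_distr. ring.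
Qed.

Lemma is_pseries_on_locally_PSeries (a : nat -> R) (r : R) (f : R -> R) (t : R) :
  is_pseries_on a r f -> Rabs t < r -> locally t (fun s => PSeries a s = f s).
Proof.
  intros Ha Ht. assert (Hp : 0 < r - Rabs t) by lra.
  exists (mkposreal _ Hp). intros s Hs. change (Rabs (s - t) < r - Rabs t) in Hs.
  apply (is_pseries_on_PSeries a r f Ha). pose proof (Rabs_triang_inv s t). lra.
Qed.

Lemma is_pseries_on_ex_derive (a : nat -> R) (r : R) (f : R -> R) :
  is_pseries_on a r f -> forall t, Rabs t < r -> ex_derive f t.
Proof.
  intros Ha t Ht. apply ex_derive_ext_loc with (PSeries a).
  - now apply (is_pseries_on_locally_PSeries a r).
  - apply ex_derive_PSeries. now apply (is_pseries_on_CV_radius a r f).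
Qed.

Lemma is_pseries_on_derive (a : nat -> R) (r : R) (f : R -> R) :
  is_pseries_on a r f -> is_pseries_on (PS_derive a) r (Derive f).
Proof.
  intros Ha t Ht. rewrite <- (Derive_ext_loc (PSeries a)).
  - apply is_pseries_derive. now apply (is_pseries_on_CV_radius a r f).
  - now apply (is_pseries_on_locally_PSeries a r).
Qed.

Lemma is_pseries_coef_unique_punctured (a b : nat -> R) (r : R) (f : R -> R) : 0 < r ->
  (forall t, 0 < Rabs t < r -> is_pseries a t (f t)) ->
  (forall t, 0 < Rabs t < r -> is_pseries b t (f t)) -> forall n, a n = b n.
Proof.
  intros Hr Ha Hb n.
  assert (Ca := CV_radius_gt_of_ex_pseries a r (fun t Ht => ex_intro _ _ (Ha t Ht))).
  assert (Cb := CV_radius_gt_of_ex_pseries b r (fun t Ht => ex_intro _ _ (Hb t Ht))).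
  assert (H0 : Rabs 0 < r) by (rewrite Rabs_R0; exact Hr).
  assert (Hab : forall t, 0 < Rabs t < r -> PSeries a t = PSeries b t).
  { intros t Ht. now rewrite (is_pseries_unique _ _ _ (Ha t Ht)), (is_pseries_unique _ _ _ (Hb t Ht)). }
  (* [PSeries_ext_recip] also needs agreement at [0]: get it by continuity. *)
  assert (Hab0 : PSeries a 0 = PSeries b 0).
  { assert (La := is_lim_continuity _ _ (PSeries_continuity a 0 (Ca 0 H0))).
    assert (Lb := is_lim_continuity _ _ (PSeries_continuity b 0 (Cb 0 H0))).
    apply is_lim_ext_loc with (g := PSeries b) in La.
    - apply is_lim_unique in La, Lb. congruence.
    - exists (mkposreal r Hr). intros t Ht Ht0. apply Hab. split.
      + apply Rabs_pos_lt. exact Ht0.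
      + change (Rabs (t - 0) < r) in Ht. now rewrite Rminus_0_r in Ht. }
  apply PSeries_ext_recip.
  - rewrite <- Rabs_R0. now apply Ca.
  - rewrite <- Rabs_R0. now apply Cb.
  - exists (mkposreal r Hr). intros t Ht.
    change (Rabs (t - 0) < r) in Ht. rewrite Rminus_0_r in Ht.
    destruct (Req_dec t 0) as [->|Ht0]; [exact Hab0|].
    apply Hab. split; [now apply Rabs_pos_lt | exact Ht].
Qed.

Lemma is_pseries_on_coef_unique (a b : nat -> R) (r : R) (f : R -> R) : 0 < r ->
  is_pseries_on a r f -> is_pseries_on b r f -> forall n, a n = b n.
Proof.
  intros Hr Ha Hb. apply (is_pseries_coef_unique_punctured a b r f Hr).
  - intros t Ht. apply Ha, Ht.
  - intros t Ht. apply Hb, Ht.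
Qed.

Lemma PS_derive_pow (a : nat -> R) (r : R) (f : R -> R) (k n : nat) : 0 < r ->
  is_pseries_on a r f ->
  PS_derive (PS_pow a (S k)) n = INR (S k) * PS_mult (PS_derive a) (PS_pow a k) n.
Proof.
  intros Hr Ha. revert n.
  apply (is_pseries_on_coef_unique _ _ r (fun t => INR (S k) * (Derive f t * f t ^ k)) Hr).
  - apply is_pseries_on_ext with (Derive (fun t => f t ^ S k)).
    + intros t Ht. apply is_derive_unique.
      replace (INR (S k) * (Derive f t * f t ^ k))
        with (INR (S k) * Derive f t * f t ^ Nat.pred (S k)) by (simpl; ring).
      apply is_derive_pow, Derive_correct. now apply (is_pseries_on_ex_derive a r).
    + apply is_pseries_on_derive, is_pseries_on_pow, Ha.
  - apply is_pseries_on_scal, is_pseries_on_mult.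
    + now apply is_pseries_on_derive.
    + now apply is_pseries_on_pow.
Qed.

Lemma is_pseries_on_PS_Int (g : nat -> R) (r : R) (F f : R -> R) :
  is_pseries_on g r f -> (forall t, Rabs t < r -> is_derive F t (f t)) ->
  is_pseries_on (PS_Int g) r (fun t => F t - F 0).
Proof.
  intros Hg HF t Ht.
  assert (Cg := is_pseries_on_CV_radius g r f Hg).
  assert (Hin : forall s, Rmin 0 t <= s <= Rmax 0 t -> Rabs s < r).
  { intros s Hs. rewrite Rmin_comm, Rmax_comm in Hs.
    pose proof (Rabs_le_between_min_max t 0 s Hs) as Hst. rewrite !Rminus_0_r in Hst. lra. }
  replace (F t - F 0) with (PSeries (PS_Int g) t).
  - apply PSeries_correct, CV_radius_inside. rewrite CV_radius_Int. now apply Cg.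
  - rewrite <- (is_RInt_unique _ _ _ _ (is_RInt_PSeries g t (Cg t Ht))).
    apply is_RInt_unique, (is_RInt_derive F).
    + intros s Hs. rewrite (is_pseries_on_PSeries g r f Hg) by auto. apply HF; auto.
    + intros s Hs. apply continuity_pt_filterlim, PSeries_continuity. auto.
Qed.

Lemma is_pseries_on_exp_comp (x : R) (a b : nat -> R) (r : R) (A : R -> R) (n : nat) :
  0 < r -> a 0%nat = 0 -> is_pseries_on a r A ->
  is_pseries_on b r (fun t => exp (x * A t)) ->
  b n = PS_comp (fun k => x ^ k / INR (fact k)) a n.
Proof.
  intros Hr Ha0 Ha Hb. revert n.
  assert (H0 : Rabs 0 < r) by (rewrite Rabs_R0; exact Hr).
  apply (PS_derive_mult_unique (fun i => x * PS_derive a i)).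
  - apply (is_pseries_on_coef_unique _ _ r (fun t => x * Derive A t * exp (x * A t)) Hr).
    + apply is_pseries_on_ext with (Derive (fun t => exp (x * A t))).
      * intros t Ht. apply is_derive_unique.
        auto_derive; [now apply (is_pseries_on_ex_derive a r A) | rewrite Rmult_1_l; reflexivity].
      * apply is_pseries_on_derive, Hb.
    + apply is_pseries_on_mult; [apply is_pseries_on_scal, is_pseries_on_derive, Ha | exact Hb].
  - intros m. apply PS_derive_exp_comp; [exact Ha0|].
    intros k j. now apply (PS_derive_pow a r A).
  - rewrite <- PSeries_0, (is_pseries_on_PSeries b r _ Hb 0 H0).
    rewrite <- (is_pseries_on_PSeries a r A Ha 0 H0), PSeries_0, Ha0.
    unfold PS_comp. simpl. rewrite Rmult_0_r, exp_0. field.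
Qed.

Lemma pow_div_fact_le_exp (y : R) (m : nat) : 0 <= y -> y ^ m / INR (fact m) <= exp y.
Proof.
  intros Hy. eapply Rle_trans; [|apply (exp_ge_taylor y m Hy)].
  destruct m as [|m]; [simpl; lra|]. rewrite tech5.
  enough (0 <= sum_f_R0 (fun k => y ^ k / INR (fact k)) m) by lra.
  apply cond_pos_sum. intros k. apply Rdiv_le_0_compat; [now apply pow_le | apply INR_fact_lt_0].
Qed.

Lemma is_lim_pow_mul_exp_neg (c : R) (m : nat) : 0 < c ->
  is_lim (fun x => x ^ m * exp (- c * x)) p_infty 0.
Proof.
  intros Hc. set (K := INR (fact (S m)) / c ^ S m).
  (* [exp (c x) >= (c x) ^ (m + 1) / (m + 1)!] gives [x ^ m * exp (- c x) <= K / x]. *)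
  apply (is_lim_le_le_loc (fun _ => 0) (fun x => K * / x)).
  - exists 0. intros x Hx. split.
    + apply Rmult_le_pos; [apply pow_le; lra | apply Rlt_le, exp_pos].
    + assert (Hexp : exp (c * x) * exp (- c * x) = 1).
      { rewrite <- exp_plus. replace (c * x + - c * x) with 0 by ring. apply exp_0. }
      assert (Hle1 : (c * x) ^ S m / INR (fact (S m)) * exp (- c * x) <= 1).
      { rewrite <- Hexp. apply Rmult_le_compat_r; [apply Rlt_le, exp_pos|].
        apply pow_div_fact_le_exp. nra. }
      assert (HK : 0 <= K * / x).
      { unfold K. apply Rmult_le_pos; [apply Rdiv_le_0_compat | apply Rlt_le, Rinv_0_lt_compat; lra].
        - apply pos_INR.
        - apply pow_lt. lra. }
      replace (x ^ m * exp (- c * x))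
        with (K * / x * ((c * x) ^ S m / INR (fact (S m)) * exp (- c * x))).
      * rewrite <- (Rmult_1_r (K * / x)) at 2. now apply Rmult_le_compat_l.
      * unfold K. rewrite Rpow_mult_distr. simpl pow. field.
        repeat split; try lra; [apply INR_fact_neq_0 | apply pow_nonzero; lra].
  - apply is_lim_const.
  - replace (Finite 0) with (Rbar_mult K (Rbar_inv p_infty)) by (simpl; f_equal; ring).
    apply is_lim_scal_l, is_lim_inv; [apply is_lim_id | discriminate].
Qed.

(* Obtained by integrating [x ^ k * exp (- c x)] by parts [k] times. *)
Fixpoint pow_mul_exp_neg_antideriv (c : R) (k : nat) (x : R) : R :=
  match k with
  | O => - exp (- c * x) / c
  | S j => (- x ^ S j * exp (- c * x) + INR (S j) * pow_mul_exp_neg_antideriv c j x) / c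
  end.

Lemma is_derive_pow_mul_exp_neg_antideriv (c : R) (k : nat) (x : R) : c <> 0 ->
  is_derive (pow_mul_exp_neg_antideriv c k) x (x ^ k * exp (- c * x)).
Proof.
  intros Hc. induction k as [|k IH]; cbn [pow_mul_exp_neg_antideriv].
  - auto_derive; [exact I | field; exact Hc].
  - auto_derive.
    + eexists. exact IH.
    + replace (Derive (fun y => pow_mul_exp_neg_antideriv c k y) x) with (x ^ k * exp (- c * x))
        by (symmetry; now apply is_derive_unique).
      destruct k as [|j]; simpl; field; exact Hc.
Qed.

Lemma pow_mul_exp_neg_antideriv_0 (c : R) (k : nat) : c <> 0 ->
  pow_mul_exp_neg_antideriv c k 0 = - INR (fact k) / c ^ S k.
Proof.
  intros Hc. induction k as [|k IH]; cbn [pow_mul_exp_neg_antideriv].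
  - rewrite Rmult_0_r, exp_0. simpl. field. exact Hc.
  - rewrite IH, pow_i, fact_simpl, mult_INR by lia. simpl pow. field.
    split; [apply pow_nonzero|]; exact Hc.
Qed.

Lemma is_lim_pow_mul_exp_neg_antideriv (c : R) (k : nat) : 0 < c ->
  is_lim (pow_mul_exp_neg_antideriv c k) p_infty 0.
Proof.
  intros Hc. assert (Hlim := fun m => is_lim_scal_l _ (- / c) _ _ (is_lim_pow_mul_exp_neg c m Hc)).
  simpl in Hlim. rewrite Rmult_0_r in Hlim.
  induction k as [|k IH]; cbn [pow_mul_exp_neg_antideriv].
  - apply is_lim_ext with (fun x => (- / c) * (x ^ 0 * exp (- c * x))); [|apply Hlim].
    intros x. simpl. field. lra.
  - apply is_lim_ext with
      (fun x => (- / c) * (x ^ S k * exp (- c * x)) + INR (S k) / c * pow_mul_exp_neg_antideriv c k x).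
    { intros x. field. lra. }
    apply (is_lim_scal_l _ (INR (S k) / c)) in IH. simpl in IH. rewrite Rmult_0_r in IH.
    pose proof (is_lim_plus' _ _ _ _ _ (Hlim (S k)) IH) as Hsum. now rewrite Rplus_0_r in Hsum.
Qed.

Lemma is_RInt_gen_pow_mul_exp_neg (c : R) (k : nat) : 0 < c ->
  is_RInt_gen (fun x => x ^ k * exp (- c * x)) (at_point 0) (Rbar_locally p_infty)
    (INR (fact k) / c ^ S k).
Proof.
  intros Hc. set (F := pow_mul_exp_neg_antideriv c k).
  assert (HF : forall x, is_derive F x (x ^ k * exp (- c * x)))
    by (intros; apply is_derive_pow_mul_exp_neg_antideriv; lra).
  apply is_RInt_gen_ext with (Derive F).
  { apply filter_forall. intros ab x _. now apply is_derive_unique. }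
  replace (INR (fact k) / c ^ S k) with (0 - F 0)
    by (unfold F; rewrite pow_mul_exp_neg_antideriv_0 by lra; field; apply pow_nonzero; lra).
  apply is_RInt_gen_Derive.
  - apply filter_forall. intros ab x _. eexists. apply HF.
  - apply filter_forall. intros ab x _.
    apply continuous_ext with (fun x => x ^ k * exp (- c * x)).
    { intros y. symmetry. now apply is_derive_unique. }
    apply (ex_derive_continuous (V := R_NormedModule)). auto_derive. exact I.
  - intros P HP. apply (locally_singleton _ _ HP).
  - apply is_lim_pow_mul_exp_neg_antideriv, Hc.
Qed.

Lemma is_RInt_gen_sum_f_R0 {Fa Fb : (R -> Prop) -> Prop} {FFa : Filter Fa} {FFb : Filter Fb}
  (f : nat -> R -> R) (I : nat -> R) (n : nat) :
  (forall k, is_RInt_gen (f k) Fa Fb (I k)) ->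
  is_RInt_gen (fun x => sum_f_R0 (fun k => f k x) n) Fa Fb (sum_f_R0 I n).
Proof.
  intros Hf. induction n as [|n IH]; [apply Hf|].
  exact (is_RInt_gen_plus _ _ _ _ IH (Hf (S n))).
Qed.

(* Term by term: [int_0^oo exp (- c x) exp (- x A) = 1 / (c + A)] at the level of coefficients. *)
Lemma is_RInt_gen_exp_neg_mul_exp_comp (c : R) (a : nat -> R) (n : nat) : 0 < c ->
  is_RInt_gen (fun x => exp (- c * x) * PS_comp (fun k => (- x) ^ k / INR (fact k)) a n)
    (at_point 0) (Rbar_locally p_infty) (PS_comp (fun k => (-1) ^ k / c ^ S k) a n).
Proof.
  intros Hc. set (w k := (-1) ^ k / INR (fact k) * PS_pow a k n).
  apply is_RInt_gen_ext with (fun x => sum_f_R0 (fun k => w k * (x ^ k * exp (- c * x))) n).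
  { apply filter_forall. intros ab x _. unfold PS_comp, w.
    rewrite <- sum_f_R0_mult_l. apply sum_eq. intros k _.
    replace ((- x) ^ k) with ((-1) ^ k * x ^ k) by (rewrite <- Rpow_mult_distr; f_equal; ring).
    field. apply INR_fact_neq_0. }
  replace (PS_comp (fun k => (-1) ^ k / c ^ S k) a n)
    with (sum_f_R0 (fun k => w k * (INR (fact k) / c ^ S k)) n).
  - apply is_RInt_gen_sum_f_R0. intros k.
    exact (is_RInt_gen_scal _ (w k) _ (is_RInt_gen_pow_mul_exp_neg c k Hc)).
  - apply sum_eq. intros k _. unfold w. field.
    split; [apply pow_nonzero; lra | apply INR_fact_neq_0].
Qed.

Lemma e_lam_0 (lam : R) : e_lam lam 0 = 1.
Proof. unfold e_lam, Rpower. rewrite Rmult_0_r, Rplus_0_r, ln_1, Rmult_0_r. apply exp_0. Qed.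

Lemma e_lam_pos (lam t : R) : 0 < e_lam lam t.
Proof. apply exp_pos. Qed.

Lemma is_derive_e_lam (lam t : R) : lam <> 0 -> 0 < 1 + lam * t ->
  is_derive (e_lam lam) t (e_lam lam t / (1 + lam * t)).
Proof. intros Hlam Ht. unfold e_lam, Rpower. auto_derive; [exact Ht | field; lra]. Qed.

Lemma e_lam_half_double (lam t : R) : lam <> 0 -> e_lam (lam / 2) (2 * t) = e_lam lam t ^ 2.
Proof.
  intros Hlam. unfold e_lam, Rpower. simpl. rewrite Rmult_1_r, <- exp_plus. f_equal.
  replace (1 + lam / 2 * (2 * t)) with (1 + lam * t) by field. field. exact Hlam.
Qed.

Lemma e_lam_neq_1 (lam t : R) : lam <> 0 -> 0 < 1 + lam * t -> t <> 0 -> e_lam lam t <> 1.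
Proof.
  intros Hlam Ht Ht0 He. unfold e_lam, Rpower in He.
  assert (He0 : / lam * ln (1 + lam * t) = 0) by (apply exp_inv; now rewrite exp_0).
  assert (Hln : ln (1 + lam * t) = 0).
  { apply Rmult_eq_reg_l with (/ lam); [rewrite He0; ring | now apply Rinv_neq_0_compat]. }
  rewrite <- ln_1 in Hln. apply ln_inv in Hln; [|exact Ht|lra].
  apply Ht0, (Rmult_eq_reg_l lam); [lra | exact Hlam].
Qed.

Lemma one_plus_mult_pos (lam t : R) : lam <> 0 -> Rabs t < / Rabs lam -> 0 < 1 + lam * t.
Proof.
  intros Hlam Ht. assert (Hl : 0 < Rabs lam) by now apply Rabs_pos_lt.
  assert (Habs : Rabs (lam * t) < 1).
  { rewrite Rabs_mult. apply Rmult_lt_reg_l with (/ Rabs lam); [now apply Rinv_0_lt_compat|].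
    rewrite <- Rmult_assoc, Rinv_l, Rmult_1_l, Rmult_1_r by lra. exact Ht. }
  apply Rabs_def2 in Habs. lra.
Qed.

Lemma is_derive_exp_e_lam (lam x t : R) : lam <> 0 -> 0 < 1 + lam * t ->
  is_derive (fun s => exp (x * (e_lam lam s - 1))) t
    (x * (e_lam lam t / (1 + lam * t)) * exp (x * (e_lam lam t - 1))).
Proof.
  intros Hlam Ht. auto_derive.
  - eexists. now apply is_derive_e_lam.
  - replace (Derive (fun s => e_lam lam s) t) with (e_lam lam t / (1 + lam * t))
      by (symmetry; now apply is_derive_unique, is_derive_e_lam).
    unfold Rminus. ring.
Qed.

(* [B_1' B_(-1)] has sum [e_lam' exp (e_lam - 1) exp (1 - e_lam) = e_lam'],
   which integrates to [e_lam - 1]. *)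
Lemma degenerate_bell_e_lam_pseries (lam : R) (bel : nat -> R -> R) :
  lam <> 0 -> is_degenerate_bell lam bel ->
  exists (alpha : nat -> R) (r : R),
    0 < r /\ alpha 0%nat = 0 /\ is_pseries_on alpha r (fun t => e_lam lam t - 1).
Proof.
  intros Hlam Hbel.
  destruct (Hbel 1) as [r1 [Hr1 H1]]. destruct (Hbel (-1)) as [r2 [Hr2 H2]].
  set (r := Rmin r1 (Rmin r2 (/ Rabs lam))).
  assert (Hr : 0 < r) by (repeat apply Rmin_glb_lt; auto; now apply Rinv_0_lt_compat, Rabs_pos_lt).
  assert (Hpos : forall t, Rabs t < r -> 0 < 1 + lam * t).
  { intros t Ht. apply one_plus_mult_pos; [exact Hlam|]. now apply Rlt_Rmin, proj2, Rlt_Rmin in Ht. }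
  exists (PS_Int (PS_mult (PS_derive (fun n => bel n 1 / INR (fact n)))
                          (fun n => bel n (-1) / INR (fact n)))), r.
  split; [exact Hr|]. split; [reflexivity|].
  apply is_pseries_on_ext with (fun t => e_lam lam t - e_lam lam 0).
  { intros t _. now rewrite e_lam_0. }
  apply is_pseries_on_PS_Int with (fun t => e_lam lam t / (1 + lam * t)).
  - apply is_pseries_on_ext
      with (fun t => Derive (fun s => exp (1 * (e_lam lam s - 1))) t * exp (-1 * (e_lam lam t - 1))).
    + intros t Ht.
      replace (Derive (fun s => exp (1 * (e_lam lam s - 1))) t)
        with (1 * (e_lam lam t / (1 + lam * t)) * exp (1 * (e_lam lam t - 1)))
        by (symmetry; apply is_derive_unique, is_derive_exp_e_lam; auto).
      rewrite Rmult_assoc, <- exp_plus.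
      replace (1 * (e_lam lam t - 1) + -1 * (e_lam lam t - 1)) with 0 by ring.
      rewrite exp_0. ring.
    + apply is_pseries_on_mult.
      * apply is_pseries_on_derive, (is_pseries_on_le _ r1); [apply Rmin_l | exact H1].
      * apply (is_pseries_on_le _ r2); [|exact H2]. eapply Rle_trans; [apply Rmin_r | apply Rmin_l].
  - intros t Ht. apply is_derive_e_lam; auto.
Qed.

Lemma degenerate_bell_coef (lam : R) (bel : nat -> R -> R) (alpha : nat -> R) (r : R) :
  is_degenerate_bell lam bel -> 0 < r -> alpha 0%nat = 0 ->
  is_pseries_on alpha r (fun t => e_lam lam t - 1) ->
  forall x n, bel n x / INR (fact n) = PS_comp (fun k => x ^ k / INR (fact k)) alpha n.
Proof.
  intros Hbel Hr Ha0 Ha x n. destruct (Hbel x) as [rx [Hrx Hx]].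
  apply (is_pseries_on_exp_comp x alpha (fun m => bel m x / INR (fact m)) (Rmin r rx)
           (fun t => e_lam lam t - 1)).
  - now apply Rmin_glb_lt.
  - exact Ha0.
  - apply (is_pseries_on_le _ r); [apply Rmin_l | exact Ha].
  - apply (is_pseries_on_le _ rx); [apply Rmin_r | exact Hx].
Qed.

Lemma degenerate_bernoulli_diff_pseries (lam : R) (beta1 beta2 : nat -> R) :
  lam <> 0 -> is_degenerate_bernoulli lam beta1 -> is_degenerate_bernoulli (lam / 2) beta2 ->
  exists rho, 0 < rho /\ forall t, 0 < Rabs t < rho ->
    is_pseries (fun n => beta1 n / INR (fact n) - 2 ^ n * (beta2 n / INR (fact n))) t
      (t / (e_lam lam t + 1)).
Proof.
  intros Hlam [r1 [Hr1 H1]] [r2 [Hr2 H2]].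
  exists (Rmin r1 (Rmin (r2 / 2) (/ Rabs lam))). split.
  { repeat apply Rmin_glb_lt; try lra. now apply Rinv_0_lt_compat, Rabs_pos_lt. }
  intros t [Ht0 Ht]. apply Rlt_Rmin in Ht as [Ht1 Ht]. apply Rlt_Rmin in Ht as [Ht2 Htlam].
  assert (He1 : e_lam lam t - 1 <> 0).
  { apply Rminus_eq_contra, e_lam_neq_1; [exact Hlam | now apply one_plus_mult_pos |].
    intros ->. rewrite Rabs_R0 in Ht0. lra. }
  assert (He := e_lam_pos lam t).
  assert (P1 : is_pseries (fun n => beta1 n / INR (fact n)) t (t / (e_lam lam t - 1)))
    by (apply H1; lra).
  assert (P2 : is_pseries (fun n => 2 ^ n * (beta2 n / INR (fact n))) t
                 (2 * t / (e_lam lam t ^ 2 - 1))).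
  { rewrite <- e_lam_half_double by exact Hlam. apply is_pseries_scal_arg, H2.
    rewrite Rabs_mult, Rabs_pos_eq by lra. lra. }
  replace (t / (e_lam lam t + 1)) with (t / (e_lam lam t - 1) - 2 * t / (e_lam lam t ^ 2 - 1)).
  - exact (is_pseries_minus _ _ t _ _ P1 P2).
  - replace (e_lam lam t ^ 2 - 1) with ((e_lam lam t - 1) * (e_lam lam t + 1)) by ring.
    field. split; [lra | exact He1].
Qed.

Lemma degenerate_bernoulli_diff_coef (lam : R) (beta1 beta2 alpha : nat -> R) (r : R) :
  lam <> 0 -> is_degenerate_bernoulli lam beta1 -> is_degenerate_bernoulli (lam / 2) beta2 ->
  0 < r -> alpha 0%nat = 0 -> is_pseries_on alpha r (fun t => e_lam lam t - 1) ->
  forall n, beta1 n / INR (fact n) - 2 ^ n * (beta2 n / INR (fact n))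
            = PS_incr_1 (PS_comp (fun k => (-1) ^ k / 2 ^ S k) alpha) n.
Proof.
  intros Hlam Hb1 Hb2 Hr Ha0 Ha.
  destruct (degenerate_bernoulli_diff_pseries lam beta1 beta2 Hlam Hb1 Hb2) as [rho [Hrho Hd]].
  set (d n := beta1 n / INR (fact n) - 2 ^ n * (beta2 n / INR (fact n))).
  set (e_plus_1 m := 2 * PS_one m + alpha m).
  assert (Hep1 : is_pseries_on e_plus_1 r (fun t => e_lam lam t + 1)).
  { apply is_pseries_on_ext with (fun t => 2 * 1 + (e_lam lam t - 1)); [intros; ring|].
    apply is_pseries_on_plus; [apply is_pseries_on_scal, is_pseries_on_one | exact Ha]. }
  assert (Hmult : forall n, PS_mult e_plus_1 d n = PS_incr_1 PS_one n).
  { apply (is_pseries_coef_unique_punctured _ _ (Rmin r rho) (fun t => t)).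
    { now apply Rmin_glb_lt. }
    - intros t [Ht0 Ht]. apply Rlt_Rmin in Ht as [Htr Htrho].
      replace t with ((e_lam lam t + 1) * (t / (e_lam lam t + 1))) at 2
        by (field; pose proof (e_lam_pos lam t); lra).
      apply is_pseries_mult; [now apply Hep1 | now apply Hd |
                              now apply (is_pseries_on_CV_radius _ r _ Hep1) |].
      apply (CV_radius_gt_of_ex_pseries d rho); [|exact Htrho].
      intros s Hs. eexists. now apply Hd.
    - intros t _.
      assert (Ht := is_pseries_incr_1 (V := R_NormedModule) _ t _
                      (is_pseries_on_one (Rabs t + 1) t ltac:(lra))).
      change (scal t 1) with (t * 1) in Ht. now rewrite Rmult_1_r in Ht. }
  apply (PS_mult_cancel_l e_plus_1).
  - unfold e_plus_1. rewrite Ha0. simpl. lra.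
  - intros n. rewrite Hmult, PS_mult_incr_1_r.
    destruct n as [|n]; [reflexivity|]. symmetry. apply PS_mult_inv_comp; [lra | exact Ha0].
Qed.

Theorem theorem12 (lam : R) (Hlam : lam <> 0)
  (bel : nat -> R -> R) (beta1 beta2 : nat -> R)
  (Hbel : is_degenerate_bell lam bel)
  (Hb1 : is_degenerate_bernoulli lam beta1)
  (Hb2 : is_degenerate_bernoulli (lam / 2) beta2)
  (n : nat) :
  is_RInt_gen (fun x => exp (-2 * x) * bel n (- x))
    (at_point 0) (Rbar_locally p_infty)
    ((beta1 (S n) - 2 ^ (S n) * beta2 (S n)) / INR (S n)).
Proof.
  destruct (degenerate_bell_e_lam_pseries lam bel Hlam Hbel) as [alpha [r [Hr [Ha0 Ha]]]].
  assert (Hbell := degenerate_bell_coef lam bel alpha r Hbel Hr Ha0 Ha).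
  assert (Hbern :=
    degenerate_bernoulli_diff_coef lam beta1 beta2 alpha r Hlam Hb1 Hb2 Hr Ha0 Ha (S n)).
  cbn [PS_incr_1] in Hbern.
  assert (Hfact : INR (fact n) <> 0) by apply INR_fact_neq_0.
  assert (HSn : INR (S n) <> 0) by (apply not_0_INR; lia).
  replace ((beta1 (S n) - 2 ^ S n * beta2 (S n)) / INR (S n))
    with (INR (fact n) * PS_comp (fun k => (-1) ^ k / 2 ^ S k) alpha n)
    by (rewrite <- Hbern, fact_simpl, mult_INR; field; auto).
  assert (Hpt : forall x,
    INR (fact n) * (exp (- 2 * x) * PS_comp (fun k => (- x) ^ k / INR (fact k)) alpha n)
    = exp (-2 * x) * bel n (- x)).
  { intros x. rewrite <- (Hbell (- x) n). field. exact Hfact. }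
  apply (is_RInt_gen_ext (fun x =>
    INR (fact n) * (exp (- 2 * x) * PS_comp (fun k => (- x) ^ k / INR (fact k)) alpha n))).
  - apply filter_forall. intros ab x _. apply Hpt.
  - exact (is_RInt_gen_scal (Fa := at_point 0) (Fb := Rbar_locally p_infty) _ _ _
             (is_RInt_gen_exp_neg_mul_exp_comp 2 alpha n ltac:(lra))).
Qed.
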